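(* Let $C>0$, $\epsilon\ge0$, and let $(\hat f,\bar\lambda)\in\Delta(\mathcal{H})\times\Lambda_C$ be an $\epsilon$-approximate equilibrium of the $C$-bounded minimax game $\min_{f\in\Delta(\mathcal{H})}\max_{\lambda\in\Lambda_C}\mathcal{L}_{\mathcal{D}}(f,\lambda)$. Then $\mathbb{E}_{h\sim\hat f}\mathbb{E}_{\mathcal{D}}[\sum_{\mathbf a\in\mathcal{A}}u(\mathbf a,y)b(h(x),\mathbf a)]\ge\mathrm{OPT}(\mathcal{H},\mathcal{D},\gamma)-2\epsilon$ and $\mathrm{DecCE}(\hat f)\le\gamma+\frac{1+2\epsilon}{C}$.
   Context: Data $(x,y)\in\mathcal{X}\times[-1,1]^d$ drawn from $\mathcal{D}$; $\mathcal{H}$ a class of functions $h:\mathcal{X}\to[-1,1]^d$. Receivers $i\in[N]$ have finite action sets $\mathcal{A}_i$, $|\mathcal{A}_i|=m$, utilities $v_i:\mathcal{A}_i\times[-1,1]^d\to[0,1]$; $b_i(z,a)=1$ if $a=\arg\max_{a'}v_i(a',z)$ (fixed tie-breaking), else $0$; $b(z,\mathbf a)=\prod_ib_i(z,a_i)$, $\mathcal{A}=\prod_i\mathcal{A}_i$; sender utility $u:\mathcal{A}\times[-1,1]^d\to[0,1]$. $\mathrm{DecCE}(f)=\max_{i,j,a\in\mathcal{A}_i}|\mathbb{E}_{h\sim f}\mathbb{E}_{\mathcal{D}}[(y_j-h(x)_j)b_i(h(x),a)]|$; $\mathrm{OPT}(\mathcal{H},\mathcal{D},\gamma)=\sup\{\mathbb{E}_{h\sim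 f}\mathbb{E}_{\mathcal{D}}[\sum_{\mathbf a}u(\mathbf a,y)b(h(x),\mathbf a)]:f\in\Delta(\mathcal{H}),\mathrm{DecCE}(f)\le\gamma\}$, where $\gamma\ge0$ is such that the feasible set is nonempty. Index set $I=\{(s,i,j,a):s\in\{\pm1\},i\in[N],j\in[d],a\in\mathcal{A}_i\}$, $\Lambda_C=\{\lambda\in\mathbb{R}_{\ge0}^I:\|\lambda\|_1\le C\}$, and $\mathcal{L}_{\mathcal{D}}(f,\lambda)=-\mathbb{E}_{h\sim f}\mathbb{E}_{\mathcal{D}}[\sum_{\mathbf a}u(\mathbf a,y)b(h(x),\mathbf a)]+\sum_{(s,i,j,a)\in I}\lambda_{s,i,j,a}\big(s\,\mathbb{E}_{h\sim f}\mathbb{E}_{\mathcal{D}}[(h(x)_j-y_j)b_i(h(x),a)]-\gamma\big)$. $(\hat f,\bar\lambda)$ is an $\epsilon$-approximate equilibrium if $\mathcal{L}_{\mathcal{D}}(\hat f,\bar\lambda)\le\min_{f\in\Delta(\mathcal{H})}\mathcal{L}_{\mathcal{D}}(f,\bar\lambda)+\epsilon$ and $\mathcal{L}_{\mathcal{D}}(\hat f,\bar\lambda)\ge\max_{\lambda\in\Lambda_C}\mathcal{L}_{\mathcal{D}}(\hat f,\lambda)-\epsilon$. *)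

From HB Require Import structures.
From mathcomp Require Import all_boot all_order all_algebra.
From mathcomp Require Import all_classical all_reals all_analysis.
Set Implicit Arguments. Unset Strict Implicit. Unset Printing Implicit Defensive.
Import Order.TTheory GRing.Theory Num.Theory.
Local Open Scope ring_scope.
Local Open Scope classical_set_scope.

Section Game.
Context {R : realType} {dsp : measure_display} {Omega : measurableType dsp}
  {X : Type} (d N m : nat).

Definition predictor := X -> 'I_d -> R.
Definition profile := {ffun 'I_N -> 'I_m}.

(* finitely supported distribution over predictors: list of (h, weight) *)
Definition fdist := seq (predictor * R).

Definition in_simplex (H : set predictor) (f : fdist) : Prop :=
  (forall p, p \in f -> H p.1 /\ 0 <= p.2) /\ \sum_(p <- f) p.2 = 1.

Definition Eh (f : fdist) (g : predictor -> R) : R := \sum_(p <- f) p.2 * g p.1.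

Variables (D : probability Omega R) (xo : Omega -> X) (yo : Omega -> 'I_d -> R).

Definition ED (g : X -> ('I_d -> R) -> R) : R :=
  Rintegral D setT (fun w => g (xo w) (yo w)).

Variables (br : 'I_N -> ('I_d -> R) -> 'I_m)
  (u : profile -> ('I_d -> R) -> R).

Definition bi (i : 'I_N) (z : 'I_d -> R) (a : 'I_m) : R := (a == br i z)%:R.
Definition bjoint (z : 'I_d -> R) (a : profile) : R := \prod_(i < N) bi i z (a i).

Definition Usend (f : fdist) : R :=
  Eh f (fun h => ED (fun x y => \sum_(a : profile) u a y * bjoint (h x) a)).

Definition calib (f : fdist) (i : 'I_N) (j : 'I_d) (a : 'I_m) : R :=
  Eh f (fun h => ED (fun x y => (y j - h x j) * bi i (h x) a)).

Definition DecCE (f : fdist) : R :=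
  \big[Num.max/0]_(i < N) \big[Num.max/0]_(j < d) \big[Num.max/0]_(a < m)
     `|calib f i j a|.

Definition OPT (H : set predictor) (gamma : R) : R :=
  sup [set Usend f | f in [set f | in_simplex H f /\ DecCE f <= gamma]].

(* index set I = {+-1} x [N] x [d] x A_i ; sign s encoded as a bool (true = +1) *)
Definition Idx := (bool * 'I_N * 'I_d * 'I_m)%type.
Definition sgn (s : bool) : R := if s then 1 else -1.

Definition in_LambdaC (C : R) (lam : Idx -> R) : Prop :=
  (forall k, 0 <= lam k) /\ \sum_(k : Idx) lam k <= C.

Definition Lag (gamma : R) (f : fdist) (lam : Idx -> R) : R :=
  - Usend f + \sum_(k : Idx)
     lam k * (sgn k.1.1.1 *
       Eh f (fun h => ED (fun x y => (h x k.1.2 - y k.1.2) * bi k.1.1.2 (h x) k.2))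
       - gamma).

Definition approx_eq (H : set predictor) (gamma C eps : R)
  (fh : fdist) (lb : Idx -> R) : Prop :=
  (forall f, in_simplex H f -> Lag gamma fh lb <= Lag gamma f lb + eps) /\
  (forall lam, in_LambdaC C lam -> Lag gamma fh lam <= Lag gamma fh lb + eps).

End Game.

(* Test the approximate equilibrium (fh, lb) against three deviations.  The
   multiplier 0 gives L(fh, lb) >= -U(fh) - eps.  A feasible f has nonpositive
   constraint terms, so L(fh, lb) <= L(f, lb) + eps <= -U(f) + eps; hence
   U(fh) >= U(f) - 2 eps for every feasible f, i.e. U(fh) >= OPT - 2 eps.  The
   multiplier putting its whole mass C on one constraint k gives
   C * constraint_k(fh) <= U(fh) - U(f) + 2 eps <= 1 + 2 eps, since utilities lie
   in [0, 1]; the two signs of k bound |calib| and hence DecCE. *)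

From HB Require Import structures.
From mathcomp Require Import all_boot all_order all_algebra.
From mathcomp Require Import all_classical all_reals all_analysis.
From mathcomp Require Import measurable_realfun lra.
Import Order.TTheory GRing.Theory Num.Theory HBNNSimple.
Local Open Scope ring_scope.
Local Open Scope classical_set_scope.

Lemma sum_ffun_prod_indicator (R : comPzSemiRingType) (I J : finType)
    (F : {ffun I -> J} -> R) (g : I -> J) :
  \sum_(a : {ffun I -> J}) F a * \prod_(i : I) (a i == g i)%:R = F [ffun i => g i].
Proof.
rewrite (bigD1 [ffun i => g i]) //= [X in _ + X]big1 => [|a ne_ag].
  by rewrite addr0 big1 ?mulr1 // => i _; rewrite ffunE eqxx.
have [i ne_ai] : exists i, a i != g i.
  apply/existsP; rewrite -negb_forall; apply: contra ne_ag => /forallP eq_ag.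
  by apply/eqP/ffunP => i; rewrite ffunE; apply/eqP.
by rewrite (bigD1 i) //= (negbTE ne_ai) mul0r mulr0.
Qed.

Section RealIntegral.
Context {R : realType} {dsp : measure_display} {T : measurableType dsp}.

(* No measurability is needed: the integral of a nonnegative function is the
   supremum of the integrals of the simple functions below it. *)
Lemma ge0_integralT_le_cst (mu : measure T R) (g : T -> \bar R) (c : \bar R) :
  (forall x, 0 <= g x)%E -> (forall x, g x <= c)%E ->
  (\int[mu]_x g x <= c * mu setT)%E.
Proof.
move=> g_ge0 g_le_c; rewrite ge0_integralTE //.
apply: ge_ereal_sup => _ [h h_le_g <-].
rewrite -integralT_nnsfun -integral_cst //.
apply: ge0_le_integral => //.
- by move=> x _; rewrite lee_fin.
- exact/measurable_EFinP/measurable_funPT.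
- by move=> x _; apply: le_trans (h_le_g x) (g_le_c x).
Qed.

Lemma Rintegral_le1 (P : probability T R) (g : T -> R) :
  (forall x, 0 <= g x <= 1) -> \int[P]_x g x <= 1.
Proof.
move=> g01.
have g_ge0 x : (0 <= (g x)%:E)%E by rewrite lee_fin; case/andP: (g01 x).
have int_ge0 := integral_ge0 P (fun x _ => g_ge0 x).
have : (\int[P]_x (g x)%:E <= 1)%E.
  apply: le_trans (ge0_integralT_le_cst P _ 1 g_ge0 _) _.
    by move=> x; rewrite lee_fin; case/andP: (g01 x).
  by rewrite mul1e probability_le1.
by rewrite /Rintegral; move: int_ge0; case: (\int[P]_x _)%E.
Qed.

Lemma fineBN (a b : \bar R) : fine (b - a)%E = - fine (a - b)%E.
Proof. by case: a => [a||]; case: b => [b||] //=; rewrite ?opprB ?oppr0. Qed.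

(* Valid without integrability, because [fine] sends both infinities to 0. *)
Lemma RintegralN (mu : measure T R) (A : set T) (g : T -> R) :
  \int[mu]_(x in A) - g x = - \int[mu]_(x in A) g x.
Proof.
rewrite /Rintegral.
have -> : (fun x => (- g x)%:E) = (\- (fun x => (g x)%:E))%E.
  by apply/funext => x; rewrite EFinN.
by rewrite [in LHS]integralE [in RHS]integralE funeposN funenegN fineBN.
Qed.

End RealIntegral.

Section Game.
Context {R : realType} {dsp : measure_display} {Omega : measurableType dsp}.
Context {X : Type} {d N m : nat}.
Context {D : probability Omega R} {xo : Omega -> X} {yo : Omega -> 'I_d -> R}.
Context {br : 'I_N -> ('I_d -> R) -> 'I_m} {u : profile N m -> ('I_d -> R) -> R}.

Local Notation hypothesis := (@predictor R X d).
Local Notation mixture := (@fdist R X d).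

Lemma Eh_ge0 [H : set hypothesis] [f : mixture] (g : hypothesis -> R) :
  in_simplex H f -> (forall h, 0 <= g h) -> 0 <= Eh f g.
Proof.
move=> [f_ge0 _] g_ge0; rewrite /Eh big_seq.
by apply: sumr_ge0 => p /f_ge0 [_ p_ge0]; rewrite mulr_ge0.
Qed.

Lemma Eh_le1 [H : set hypothesis] [f : mixture] (g : hypothesis -> R) :
  in_simplex H f -> (forall h, g h <= 1) -> Eh f g <= 1.
Proof.
move=> [f_ge0 f_sum1] g_le1; rewrite /Eh -f_sum1 !big_seq.
by apply: ler_sum => p /f_ge0 [_ p_ge0]; rewrite ler_piMr.
Qed.

Lemma EhN (f : mixture) (g : hypothesis -> R) :
  Eh f (fun h => - g h) = - Eh f g.
Proof. by rewrite /Eh -sumrN; apply: eq_bigr => p _; rewrite mulrN. Qed.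

Lemma EDN (g : X -> ('I_d -> R) -> R) :
  ED D xo yo (fun x y => - g x y) = - ED D xo yo g.
Proof. exact: RintegralN. Qed.

Lemma sum_payoff_bjoint (z y : 'I_d -> R) :
  \sum_(a : profile N m) u a y * bjoint br z a = u [ffun i => br i z] y.
Proof. exact: sum_ffun_prod_indicator. Qed.

Definition constraint (gamma : R) (f : mixture) (k : Idx d N m) : R :=
  sgn k.1.1.1 *
    Eh f (fun h => ED D xo yo (fun x y =>
      (h x k.1.2 - y k.1.2) * bi br k.1.1.2 (h x) k.2))
  - gamma.

Lemma LagE (gamma : R) (f : mixture) (lam : Idx d N m -> R) :
  Lag D xo yo br u gamma f lam
  = - Usend D xo yo br u f + \sum_(k : Idx d N m) lam k * constraint gamma f k.
Proof. by []. Qed.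

Lemma constraintE (gamma : R) (f : mixture) s i j a :
  constraint gamma f (s, i, j, a) = - (sgn s * calib D xo yo br f i j a) - gamma.
Proof.
rewrite /constraint /calib /= -mulrN -EhN; congr (_ * _ - _).
apply: eq_bigr => p _; rewrite -EDN; congr (_ * Rintegral _ _ _).
by apply/funext => w; rewrite -mulNr opprB.
Qed.

Lemma normr_calib_le_DecCE (f : mixture) i j a :
  `|calib D xo yo br f i j a| <= DecCE D xo yo br f.
Proof.
apply: (bigmax_sup i) => //; apply: (bigmax_sup j) => //.
exact: (le_bigmax _ (fun a => `|calib D xo yo br f i j a|)).
Qed.

Lemma DecCE_le (f : mixture) (B : R) :
  0 <= B -> (forall i j a, `|calib D xo yo br f i j a| <= B) ->
  DecCE D xo yo br f <= B.
Proof. by move=> B_ge0 calib_le; do 3![apply: bigmax_le => // ? _]. Qed.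

Lemma constraint_le_DecCE (gamma : R) (f : mixture) (k : Idx d N m) :
  constraint gamma f k <= DecCE D xo yo br f - gamma.
Proof.
case: k => [[[s i] j] a]; rewrite constraintE lerD2r.
apply: le_trans (normr_calib_le_DecCE f i j a).
by case: s; rewrite /sgn ?mul1r ?mulN1r ?opprK ler_normr lexx ?orbT.
Qed.

Lemma normr_calib_le_constraint (gamma : R) (f : mixture) i j a (B : R) :
  (forall s, constraint gamma f (s, i, j, a) <= B) ->
  `|calib D xo yo br f i j a| <= gamma + B.
Proof.
move=> le_B; have := le_B true; have := le_B false.
rewrite !constraintE /sgn mul1r mulN1r opprK ler_norml => ? ?.
by apply/andP; split; lra.
Qed.

Lemma in_LambdaC_ge0 [C : R] [lam : Idx d N m -> R] : in_LambdaC C lam -> 0 <= C.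
Proof. by move=> [lam_ge0 sum_le]; apply: le_trans sum_le; rewrite sumr_ge0. Qed.

Definition point_weight (k0 : Idx d N m) (c : R) (k : Idx d N m) : R :=
  (k == k0)%:R * c.

Lemma in_LambdaC_point_weight (k0 : Idx d N m) [C : R] :
  0 <= C -> in_LambdaC C (point_weight k0 C).
Proof.
move=> C_ge0; split=> [k|]; first by rewrite mulr_ge0.
rewrite (bigD1 k0) //= big1 => [|k /negbTE ne_k].
  by rewrite /point_weight eqxx mul1r addr0.
by rewrite /point_weight ne_k mul0r.
Qed.

Lemma Lag_point_weight (gamma : R) (f : mixture) (k0 : Idx d N m) (c : R) :
  Lag D xo yo br u gamma f (point_weight k0 c)
  = - Usend D xo yo br u f + c * constraint gamma f k0.
Proof.
rewrite LagE (bigD1 k0) //= big1 => [|k /negbTE ne_k].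
  by rewrite /point_weight eqxx mul1r addr0.
by rewrite /point_weight ne_k !mul0r.
Qed.

Lemma Lag0 (gamma : R) (f : mixture) :
  Lag D xo yo br u gamma f (fun _ => 0) = - Usend D xo yo br u f.
Proof. by rewrite LagE big1 ?addr0 // => k _; rewrite mul0r. Qed.

Lemma Lag_le_feasible (gamma : R) (f : mixture) (lam : Idx d N m -> R) :
  (forall k, 0 <= lam k) -> DecCE D xo yo br f <= gamma ->
  Lag D xo yo br u gamma f lam <= - Usend D xo yo br u f.
Proof.
move=> lam_ge0 f_feas; rewrite LagE gerDl sumr_le0 // => k _.
rewrite mulr_ge0_le0 //; apply: le_trans (constraint_le_DecCE gamma f k) _.
by rewrite subr_le0.
Qed.

Hypothesis u01 : forall a z, 0 <= u a z <= 1.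

Lemma Usend_ge0 [H : set hypothesis] [f : mixture] :
  in_simplex H f -> 0 <= Usend D xo yo br u f.
Proof.
move=> f_in; apply: Eh_ge0 f_in _ => h; apply: Rintegral_ge0 => w _.
by rewrite sum_payoff_bjoint; case/andP: (u01 [ffun i => br i (h (xo w))] (yo w)).
Qed.

Lemma Usend_le1 [H : set hypothesis] [f : mixture] :
  in_simplex H f -> Usend D xo yo br u f <= 1.
Proof.
move=> f_in; apply: Eh_le1 f_in _ => h; apply: Rintegral_le1 => w.
by rewrite sum_payoff_bjoint.
Qed.

Section ApproximateEquilibrium.
Context {H : set hypothesis} {gamma C eps : R} {fh : mixture} {lb : Idx d N m -> R}.
Hypothesis lb_in : in_LambdaC C lb.
Hypothesis fh_eq : approx_eq D xo yo br u H gamma C eps fh lb.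

Lemma approx_eq_Lag_ge :
  - Usend D xo yo br u fh - eps <= Lag D xo yo br u gamma fh lb.
Proof.
have zero_in : in_LambdaC C (fun _ : Idx d N m => 0).
  by split=> //; rewrite big1 // (in_LambdaC_ge0 lb_in).
by have := fh_eq.2 _ zero_in; rewrite Lag0 lerBlDr.
Qed.

Lemma approx_eq_Lag_le [f : mixture] :
  in_simplex H f -> DecCE D xo yo br f <= gamma ->
  Lag D xo yo br u gamma fh lb <= - Usend D xo yo br u f + eps.
Proof.
move=> f_in f_feas; apply: le_trans (fh_eq.1 f f_in) _.
by rewrite lerD2r Lag_le_feasible // => k; case: lb_in.
Qed.

Lemma approx_eq_Usend_ge [f : mixture] :
  in_simplex H f -> DecCE D xo yo br f <= gamma ->
  Usend D xo yo br u f - 2 * eps <= Usend D xo yo br u fh.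
Proof.
move=> f_in f_feas; have := approx_eq_Lag_le f_in f_feas.
by have := approx_eq_Lag_ge; lra.
Qed.

Lemma approx_eq_OPT_le : (exists f, in_simplex H f /\ DecCE D xo yo br f <= gamma) ->
  OPT D xo yo br u H gamma - 2 * eps <= Usend D xo yo br u fh.
Proof.
move=> [f0 f0_feas]; rewrite lerBlDr; apply: ge_sup.
  by exists (Usend D xo yo br u f0), f0.
by move=> _ [f [f_in f_feas] <-]; rewrite -lerBlDr; exact: approx_eq_Usend_ge.
Qed.

Hypothesis fh_in : in_simplex H fh.
Hypothesis feasible : exists f, in_simplex H f /\ DecCE D xo yo br f <= gamma.

Lemma approx_eq_constraint_le (k : Idx d N m) :
  C * constraint gamma fh k <= 1 + 2 * eps.
Proof.
have [f [f_in f_feas]] := feasible.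
have := fh_eq.2 _ (in_LambdaC_point_weight k (in_LambdaC_ge0 lb_in)).
rewrite Lag_point_weight; have := approx_eq_Lag_le f_in f_feas.
by have := Usend_ge0 f_in; have := Usend_le1 fh_in; lra.
Qed.

Lemma approx_eq_DecCE_le : 0 < C -> 0 <= gamma -> 0 <= eps ->
  DecCE D xo yo br fh <= gamma + (1 + 2 * eps) / C.
Proof.
move=> C_gt0 gamma_ge0 eps_ge0; apply: DecCE_le => [|i j a].
  by rewrite addr_ge0 // divr_ge0 ?ltW //; lra.
apply: normr_calib_le_constraint => s.
by rewrite ler_pdivlMr // mulrC approx_eq_constraint_le.
Qed.

End ApproximateEquilibrium.
End Game.

Theorem lemma2 (R : realType) (dsp : measure_display) (Omega : measurableType dsp)
  (X : Type) (d N m : nat)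
  (D : probability Omega R) (xo : Omega -> X) (yo : Omega -> 'I_d -> R)
  (Dy : forall w j, -1 <= yo w j <= 1)
  (H : set (X -> 'I_d -> R))
  (Hbox : forall h, H h -> forall x j, -1 <= h x j <= 1)
  (v : 'I_N -> 'I_m -> ('I_d -> R) -> R)
  (v01 : forall i a z, 0 <= v i a z <= 1)
  (br : 'I_N -> ('I_d -> R) -> 'I_m)
  (br_max : forall i z a, v i a z <= v i (br i z) z)
  (u : {ffun 'I_N -> 'I_m} -> ('I_d -> R) -> R)
  (u01 : forall a z, 0 <= u a z <= 1)
  (gamma C eps : R) (gamma_ge0 : 0 <= gamma)
  (feasible : exists f, in_simplex H f /\ DecCE D xo yo br f <= gamma)
  (C_gt0 : 0 < C) (eps_ge0 : 0 <= eps)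
  (fh : seq ((X -> 'I_d -> R) * R)) (lb : (bool * 'I_N * 'I_d * 'I_m)%type -> R)
  (fh_in : in_simplex H fh) (lb_in : in_LambdaC C lb)
  (eq : approx_eq D xo yo br u H gamma C eps fh lb) :
  Usend D xo yo br u fh >= OPT D xo yo br u H gamma - 2 * eps /\
  DecCE D xo yo br fh <= gamma + (1 + 2 * eps) / C.
Proof.
split; first exact: approx_eq_OPT_le lb_in eq feasible.
exact: (approx_eq_DecCE_le u01 lb_in eq fh_in feasible C_gt0 gamma_ge0 eps_ge0).
Qed.
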